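(* Let $q \geq 1$ and let $k$ be a positive integer with $k < n$. Let $\boldsymbol{B} = [\boldsymbol{B}[1] \ \cdots \ \boldsymbol{B}[n]] \in \mathbb{R}^{D \times N}$ be a dictionary with unit-norm columns, blocks $\boldsymbol{B}[i] \in \mathbb{R}^{D \times m_i}$, and pairwise disjoint block subspaces $\mathcal{S}_i = \operatorname{span}(\boldsymbol{B}[i])$. Assume that every signal $\boldsymbol{y} \in \mathbb{R}^D$ that admits a $k$-block-sparse representation admits a unique one. For an index set $\Lambda \subseteq \{1,\dots,n\}$ and $\boldsymbol{x} \in \bigoplus_{i \in \Lambda} \mathcal{S}_i$ let $$V_\Lambda(\boldsymbol{x}) = \min\Big\{ \sum_{i \in \Lambda} \|\boldsymbol{c}[i]\|_q \;:\; \boldsymbol{x} = \sum_{i \in \Lambda} \boldsymbol{B}[i]\boldsymbol{c}[i] \Big\}.$$ Then the following are equivalent: (i) for every set $\Lambda_k \subseteq \{1,\dots,n\}$ with $|\Lambda_k| = k$ and every $\boldsymbol{y} \in \bigoplus_{i \in \Lambda_k} \mathcal{S}_i$, every optimal solution $\boldsymbol{c}^*$ of $P_{\ell_q/\ell_1}(\boldsymbol{y})$ satisfies $\boldsymbol{c}^*[i] = \boldsymbol{0}$ for all $i \notin \Lambda_k$ (i.e. the solution of $P_{\ell_q/\ell_1}$ coincides with the $k$-block-sparse solution of $P_{\ell_q/\ell_0}$); (ii) for every $\Lambda_k \subseteq \{1,\dots,n\}$ with $|\Lambda_k| = k$, writing $\widehat{\Lambda}_k = \{1,\dots,n\} \setminus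 \Lambda_k$, and every nonzero $\boldsymbol{x} \in \big(\bigoplus_{i \in \Lambda_k} \mathcal{S}_i\big) \cap \big(\bigoplus_{i \in \widehat{\Lambda}_k} \mathcal{S}_i\big)$, one has $V_{\Lambda_k}(\boldsymbol{x}) < V_{\widehat{\Lambda}_k}(\boldsymbol{x})$.
   Context: The dictionary $\boldsymbol{B} \in \mathbb{R}^{D\times N}$ has columns of unit Euclidean norm and is partitioned into $n$ blocks $\boldsymbol{B}[i] \in \mathbb{R}^{D \times m_i}$, $\sum_i m_i = N$; blocks may have linearly dependent columns. $\mathcal{S}_i$ is the column span of $\boldsymbol{B}[i]$; the subspaces are disjoint, meaning $\mathcal{S}_i \cap \mathcal{S}_j = \{0\}$ for $i \neq j$. A vector $\boldsymbol{c} \in \mathbb{R}^N$ is written $\boldsymbol{c} = (\boldsymbol{c}[1]; \dots; \boldsymbol{c}[n])$ with $\boldsymbol{c}[i] \in \mathbb{R}^{m_i}$, so $\boldsymbol{B}\boldsymbol{c} = \sum_i \boldsymbol{B}[i]\boldsymbol{c}[i]$. A $k$-block-sparse representation of $\boldsymbol{y}$ is an expression $\boldsymbol{y} = \sum_{i \in \Lambda} \boldsymbol{s}_i$ with $\Lambda \subseteq \{1,\dots,n\}$, $|\Lambda| \le k$, $\boldsymbol{s}_i \in \mathcal{S}_i \setminus \{0\}$; it is unique if any two such expressions have the same index set $\Lambda$ and the same vectors $\boldsymbol{s}_i$. $P_{\ell_q/\ell_1}(\boldsymbol{y})$ is the convex program $\min_{\boldsymbol{c}} \sum_{i=1}^n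 \|\boldsymbol{c}[i]\|_q$ subject to $\boldsymbol{y} = \boldsymbol{B}\boldsymbol{c}$; $P_{\ell_q/\ell_0}(\boldsymbol{y})$ is $\min_{\boldsymbol{c}} \#\{i : \|\boldsymbol{c}[i]\|_q \neq 0\}$ subject to $\boldsymbol{y} = \boldsymbol{B}\boldsymbol{c}$. $\bigoplus$ denotes the (direct) sum of subspaces. *)

From HB Require Import structures.
From mathcomp Require Import all_boot all_order all_algebra.
From mathcomp Require Import all_classical all_reals all_analysis.
Set Implicit Arguments. Unset Strict Implicit. Unset Printing Implicit Defensive.
Import Order.TTheory GRing.Theory Num.Theory.
Local Open Scope classical_set_scope.
Local Open Scope ring_scope.

Section BlockSparse.
Variables (R : realType) (D n : nat) (m : 'I_n -> nat).
Variable (B : forall i : 'I_n, 'M[R]_(D, m i)).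

Definition coefs := forall i : 'I_n, 'cV[R]_(m i).

Definition lqnorm (q : R) (k : nat) (v : 'cV[R]_k) : R :=
  powR (\sum_(j < k) powR `|v j 0| q) q^-1.

Definition blockspan (i : 'I_n) : set 'cV[R]_D :=
  [set x | exists v : 'cV[R]_(m i), x = B i *m v].

Definition synth (c : coefs) : 'cV[R]_D := \sum_i B i *m c i.

Definition dsum (L : {set 'I_n}) : set 'cV[R]_D :=
  [set x | exists c : coefs, x = \sum_(i in L) B i *m c i].

Definition unit_norm_cols : Prop :=
  forall (i : 'I_n) (j : 'I_(m i)), \sum_(r < D) (B i r j) ^+ 2 = 1.

Definition disjoint_blocks : Prop :=
  forall i j : 'I_n, i != j -> forall x, blockspan i x -> blockspan j x -> x = 0.

Definition kbs_rep (k : nat) (y : 'cV[R]_D) (L : {set 'I_n})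
    (s : 'I_n -> 'cV[R]_D) : Prop :=
  [/\ (#|L| <= k)%N,
      (forall i, i \in L -> blockspan i (s i) /\ s i != 0)
    & y = \sum_(i in L) s i].

Definition unique_kbs (k : nat) : Prop :=
  forall y L s L' s', kbs_rep k y L s -> kbs_rep k y L' s' ->
    L = L' /\ (forall i, i \in L -> s i = s' i).

Definition l1_obj (q : R) (c : coefs) : R := \sum_i lqnorm q (c i).

Definition Pl1_opt (q : R) (y : 'cV[R]_D) (c : coefs) : Prop :=
  y = synth c /\ forall c' : coefs, y = synth c' -> l1_obj q c <= l1_obj q c'.

(* V_L(x) = min { sum_{i in L} ||c[i]||_q : x = sum_{i in L} B[i] c[i] },
   written as an infimum (the minimum is attained) *)
Definition Vfun (q : R) (L : {set 'I_n}) (x : 'cV[R]_D) : R :=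
  inf [set r : R | exists c : coefs,
         x = \sum_(i in L) B i *m c i /\ r = \sum_(i in L) lqnorm q (c i)].

End BlockSparse.

(* Everything works for one index set [L] at a time.  If [P_l1] recovers supports inside
   [L] and [x <> 0] lies in both sums, take a minimizer of [P_l1(x)]: it lives on
   [L], so its value is at least [V_L(x)].  If [V_(~L)(x) <= V_L(x)], a
   representation of [x] on [~L] of value [V_(~L)(x)], extended by zero, is
   another minimizer, so it must also live on [L]: hence [x = 0].  Conversely, if
   an optimal [c] for [y] in the sum over [L] has a nonzero block outside [L],
   its part [x] outside [L] lies in both sums; representing [x] on [L] at cost
   [V_L(x) < V_(~L)(x)] instead strictly lowers the objective.  Minimizers exist
   because the objective, a sum of l_q norms (Minkowski), is continuous and its
   sublevel sets of feasible coefficients are compact. *)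

From HB Require Import structures.
From mathcomp Require Import all_boot all_order all_algebra.
From mathcomp Require Import all_classical all_reals all_analysis.
From mathcomp Require Import ring.

Set Implicit Arguments.
Unset Strict Implicit.
Unset Printing Implicit Defensive.
Import Order.TTheory GRing.Theory Num.Theory.
Import numFieldNormedType.Exports ArrowAsProduct.
Local Open Scope classical_set_scope.
Local Open Scope ring_scope.

Section LqNorm.
Variables (R : realType) (q : R).
Hypothesis q_ge1 : 1 <= q.

Let q_gt0 : 0 < q. Proof. exact: lt_le_trans ltr01 q_ge1. Qed.

Lemma ler_powR2 : {in Num.nneg &, {mono @powR R ^~ q : x y / x <= y}}.
Proof. exact: le_mono_in (gt0_ltr_powR q_gt0). Qed.

Lemma lqnorm_ge0 k (v : 'cV[R]_k) : 0 <= lqnorm q v.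
Proof. exact: powR_ge0. Qed.

Lemma lqnorm_powR k (v : 'cV[R]_k) :
  lqnorm q v `^ q = \sum_j `|v j 0| `^ q.
Proof.
by rewrite -powRrM mulVf ?gt_eqF // powRr1 // sumr_ge0 // => j _; exact: powR_ge0.
Qed.

Lemma ler_lqnorm k (v : 'cV[R]_k) s : 0 <= s ->
  (lqnorm q v <= s) = (\sum_j `|v j 0| `^ q <= s `^ q).
Proof. by move=> s0; rewrite -lqnorm_powR ler_powR2 // nnegrE lqnorm_ge0. Qed.

Lemma ger_lqnorm k (v : 'cV[R]_k) s : 0 <= s ->
  (s <= lqnorm q v) = (s `^ q <= \sum_j `|v j 0| `^ q).
Proof. by move=> s0; rewrite -lqnorm_powR ler_powR2 // nnegrE lqnorm_ge0. Qed.

Lemma lqnorm0 k : lqnorm q (0 : 'cV[R]_k) = 0.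
Proof.
apply/le_anti; rewrite lqnorm_ge0 andbT ler_lqnorm // powR0 ?gt_eqF //.
by rewrite big1 // => j _; rewrite mxE normr0 powR0 ?gt_eqF.
Qed.

Lemma lqnorm_eq0 k (v : 'cV[R]_k) : lqnorm q v = 0 -> v = 0.
Proof.
move=> /(congr1 (@powR R ^~ q)); rewrite lqnorm_powR powR0 ?gt_eqF // => /eqP.
rewrite psumr_eq0 => [/allP v0|j _]; last exact: powR_ge0.
apply/matrixP => i j; rewrite ord1 mxE.
by have /v0 /eqP /powR_eq0_eq0 /normr0_eq0 := mem_index_enum i.
Qed.

Lemma lqnorm_gt0 k (v : 'cV[R]_k) : v != 0 -> 0 < lqnorm q v.
Proof.
by move=> v0; rewrite lt0r lqnorm_ge0 andbT; apply: contra_neq v0; exact: lqnorm_eq0.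
Qed.

Lemma lqnormN k (v : 'cV[R]_k) : lqnorm q (- v) = lqnorm q v.
Proof. by rewrite /lqnorm; congr powR; apply: eq_bigr => j _; rewrite mxE normrN. Qed.

Lemma ler_abs_lqnorm k (v : 'cV[R]_k) j : `|v j 0| <= lqnorm q v.
Proof.
rewrite ger_lqnorm // (bigD1 j) //= lerDl.
by apply: sumr_ge0 => i _; exact: powR_ge0.
Qed.

Lemma lqnorm_le_l1 k (v : 'cV[R]_k) : lqnorm q v <= \sum_j `|v j 0|.
Proof.
set S := \sum_j _; have S0 : 0 <= S by rewrite sumr_ge0.
rewrite ler_lqnorm // -(mulr_powRB1 S0 q_gt0) mulr_suml.
apply: ler_sum => j _; rewrite -(mulr_powRB1 (normr_ge0 _) q_gt0).
have vS : `|v j 0| <= S by rewrite /S (bigD1 j) //= lerDl sumr_ge0.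
apply: ler_pM; rewrite ?powR_ge0 //.
by apply: ge0_ler_powR; rewrite ?subr_ge0 ?nnegrE.
Qed.

Lemma powR_convex (t x y : R) : 0 <= t <= 1 -> 0 <= x -> 0 <= y ->
  (t * x + (1 - t) * y) `^ q <= t * x `^ q + (1 - t) * y `^ q.
Proof.
move=> t01 x0 y0.
have t_itv : Itv.spec (@Itv.num_sem R) (Itv.Real `[0%Z, 1%Z]) t.
  by rewrite /= /Itv.num_sem /= num_real in_itv.
have := @convex_powR R q q_ge1 (Itv.mk t_itv) x y.
by rewrite !inE /= !in_itv /= x0 y0 !convRE; apply.
Qed.

(* [a + b = (A + B) (t (a/A) + (1 - t) (b/B))] with [t = A/(A+B)], then convexity. *)
Lemma powRD_le_convex (A B a b : R) : 0 < A -> 0 < B -> 0 <= a -> 0 <= b ->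
  (a + b) `^ q <=
  (A + B) `^ q * (A / (A + B) * (a / A) `^ q + B / (A + B) * (b / B) `^ q).
Proof.
move=> A0 B0 a0 b0; have AB0 : 0 < A + B by exact: addr_gt0.
have tB : B / (A + B) = 1 - A / (A + B) by field; rewrite gt_eqF.
have ab : a + b = (A + B) * (A / (A + B) * (a / A) + B / (A + B) * (b / B)).
  by field; rewrite !gt_eqF.
have t01 : 0 <= A / (A + B) <= 1.
  by rewrite divr_ge0 ?(ltW A0) ?(ltW AB0) //= ler_pdivrMr // mul1r lerDl ltW.
have w0 : 0 <= A / (A + B) * (a / A) + B / (A + B) * (b / B).
  by rewrite addr_ge0 // mulr_ge0 // divr_ge0 // ltW.
rewrite ab powRM ?(ltW AB0) // ler_pM2l ?powR_gt0 // tB.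
by rewrite powR_convex // divr_ge0 // ltW.
Qed.

Lemma sum_powR_div_lqnorm k (v : 'cV[R]_k) : v != 0 ->
  \sum_j (`|v j 0| / lqnorm q v) `^ q = 1.
Proof.
move=> /lqnorm_gt0 v0.
under eq_bigr do rewrite powRM ?invr_ge0 ?lqnorm_ge0 //.
rewrite -mulr_suml -lqnorm_powR -powRM ?invr_ge0 ?lqnorm_ge0 //.
by rewrite mulfV ?gt_eqF // powR1.
Qed.

Lemma sum_powRD_le k (A B : R) (a b : 'I_k -> R) : 0 < A -> 0 < B ->
  (forall j, 0 <= a j) -> (forall j, 0 <= b j) ->
  \sum_j (a j / A) `^ q = 1 -> \sum_j (b j / B) `^ q = 1 ->
  \sum_j (a j + b j) `^ q <= (A + B) `^ q.
Proof.
move=> A0 B0 a0 b0 sa sb.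
apply: (le_trans (ler_sum _ (fun j _ => powRD_le_convex A0 B0 (a0 j) (b0 j)))).
rewrite -mulr_sumr big_split /= -[\sum_(i < k) A / _ * _]mulr_sumr.
rewrite -[\sum_(i < k) B / _ * _]mulr_sumr sa sb 2!mulr1 -mulrDl.
by rewrite divff ?mulr1 // gt_eqF // addr_gt0.
Qed.

Lemma lqnormD k (u v : 'cV[R]_k) : lqnorm q (u + v) <= lqnorm q u + lqnorm q v.
Proof.
have [->|u0] := eqVneq u 0; first by rewrite add0r lqnorm0 add0r.
have [->|v0] := eqVneq v 0; first by rewrite addr0 lqnorm0 addr0.
rewrite ler_lqnorm ?addr_ge0 ?lqnorm_ge0 //.
apply: (le_trans (y := \sum_j (`|u j 0| + `|v j 0|) `^ q)).
  apply: ler_sum => j _; rewrite mxE.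
  by apply: ge0_ler_powR; rewrite ?nnegrE ?(ltW q_gt0) ?addr_ge0 ?ler_normD.
exact: sum_powRD_le (lqnorm_gt0 u0) (lqnorm_gt0 v0) (fun j => normr_ge0 _)
  (fun j => normr_ge0 _) (sum_powR_div_lqnorm u0) (sum_powR_div_lqnorm v0).
Qed.

Lemma ler_dist_lqnorm k (u v : 'cV[R]_k) :
  `|lqnorm q u - lqnorm q v| <= \sum_j `|u j 0 - v j 0|.
Proof.
apply: (le_trans (y := lqnorm q (u - v))); last first.
  by apply: le_trans (lqnorm_le_l1 _) _; apply: ler_sum => j _; rewrite !mxE.
have uv := lqnormD v (u - v); have vu := lqnormD u (v - u).
rewrite subrKC in uv; rewrite subrKC -opprB lqnormN in vu.
by rewrite ler_distl uv andbT lerBlDr.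
Qed.

End LqNorm.

Lemma dist_le_continuous_at (T : topologicalType) (R : realType) (f h : T -> R) x :
  {for x, continuous h} -> h x = 0 -> (forall y, `|f x - f y| <= h y) ->
  {for x, continuous f}.
Proof.
move=> /cvgrPdist_lt hx hx0 fh; apply/cvgrPdist_lt => e e0.
apply: filterS (hx e e0) => y; rewrite hx0 sub0r normrN => hye.
exact: le_lt_trans (fh y) (le_lt_trans (ler_norm _) hye).
Qed.

Section ExistenceOfMinimizers.
Variables (R : realType) (q : R) (D n : nat) (m : 'I_n -> nat).
Variable B : forall i : 'I_n, 'M[R]_(D, m i).
Hypothesis q_ge1 : 1 <= q.

Lemma continuous_lqnorm_tr k : continuous (fun v : 'rV[R]_k => lqnorm q v^T).
Proof.
move=> w; pose h (u : 'rV[R]_k) := \sum_j `|w ord0 j - u ord0 j|.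
apply: (@dist_le_continuous_at _ _ _ h).
- apply: continuous_big => [|j _ u]; first exact: add_continuous.
  have wu_cont : continuous (fun u : 'rV[R]_k => w ord0 j - u ord0 j).
    move=> z; apply: continuousB; first exact: cst_continuous.
    exact: coord_continuous.
  exact: continuous_comp (wu_cont u) (@norm_continuous _ R^o _).
- by rewrite /h big1 // => j _; rewrite subrr normr0.
- move=> u; apply: le_trans (ler_dist_lqnorm q_ge1 _ _) _.
  by apply: ler_sum => j _; rewrite !mxE.
Qed.

(* Coefficients are searched as rows: compactness of boxes is [rV_compact]. *)
Definition cols (d : forall i, 'rV[R]_(m i)) : coefs R m := fun i => (d i)^T.

Lemma colsK (c : coefs R m) : cols (fun i => (c i)^T) = c.
Proof. by apply: functional_extensionality_dep => i; rewrite /cols trmxK. Qed.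

Lemma continuous_l1_obj_cols : continuous (fun d => l1_obj q (cols d)).
Proof.
apply: continuous_big => [|i _ d]; first exact: add_continuous.
have := continuous_comp (@proj_continuous _ _ i d) (@continuous_lqnorm_tr (m i) (d i)).
by apply.
Qed.

Lemma continuous_synth_cols r : continuous (fun d => synth B (cols d) r 0).
Proof.
have -> : (fun d => synth B (cols d) r 0) =
    (fun d => \sum_i \sum_j B i r j * d i ord0 j).
  apply: funext => d; rewrite /synth summxE; apply: eq_bigr => i _.
  by rewrite mxE; apply: eq_bigr => j _; rewrite mxE.
apply: continuous_big => [|i _]; first exact: add_continuous.
apply: continuous_big => [|j _ d]; first exact: add_continuous.
apply: continuousM; first exact: cst_continuous.
have := continuous_comp (@proj_continuous _ _ i d) (@coord_continuous _ _ _ ord0 j (d i)).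
by apply.
Qed.

Lemma lqnorm_le_l1_obj (c : coefs R m) i : lqnorm q (c i) <= l1_obj q c.
Proof.
by rewrite /l1_obj (bigD1 i) //= lerDl sumr_ge0 // => j _; exact: lqnorm_ge0.
Qed.

(* The feasible coefficients of objective at most that of [c0] form a closed
   subset of a compact box, on which the continuous objective attains its minimum. *)
Lemma exists_Pl1_opt (x : 'cV[R]_D) :
  (exists c, x = synth B c) -> exists c, Pl1_opt B q x c.
Proof.
case=> c0 xc0; pose M := l1_obj q c0.
pose A := (\bigcap_r [set d | synth B (cols d) r 0 = x r 0])
  `&` [set d | l1_obj q (cols d) <= M].
have A_feasible c : x = synth B c -> l1_obj q c <= M -> A (fun i => (c i)^T).
  by move=> xc cM; split; [move=> r _ /=; rewrite colsK -xc | rewrite /= colsK].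
have A_closed : closed A.
  apply: closedI.
    apply: closed_bigI => r _.
    have := (continuous_closedP _).1 (@continuous_synth_cols r) _ (@closed_eq _ (x r 0)).
    by apply.
  have := (continuous_closedP _).1 continuous_l1_obj_cols _ (@closed_le _ M).
  by apply.
pose cube i := [set v : 'rV[R]_(m i) | forall j, `[-M, M]%classic (v ord0 j)].
pose box := [set d : forall i, 'rV[R]_(m i) | forall i, cube i (d i)].
have box_compact : compact box.
  apply: tychonoff => i; have := @rV_compact R^o (m i) (fun=> `[-M, M]%classic).
  by apply=> j; exact: segment_compact.
have A_box : A `<=` box.
  move=> d [_ dM] i j /=; rewrite in_itv /= -ler_norml.
  apply: le_trans dM; apply: le_trans (lqnorm_le_l1_obj (cols d) i).
  by have := ler_abs_lqnorm q_ge1 (cols d i) j; rewrite /cols mxE.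
have A_compact : compact A := subclosed_compact A_closed box_compact A_box.
have A0 : A !=set0 by exists (fun i => (c0 i)^T); apply: A_feasible.
have [dm Adm dm_min] := compact_EVT_min A0 A_compact
  (continuous_subspaceT continuous_l1_obj_cols).
move: Adm; rewrite inE => -[synth_dm dmM]; exists (cols dm); split.
  by apply/matrixP => r j; rewrite ord1; apply/esym/synth_dm.
move=> c xc.
have [cM|Mc] := orP (le_total (l1_obj q c) M).
  have : A (fun i => (c i)^T) by exact: A_feasible.
  by rewrite -inE => /dm_min; rewrite colsK.
exact: le_trans dmM Mc.
Qed.

End ExistenceOfMinimizers.

Section BlockRecovery.
Variables (R : realType) (q : R) (D n : nat) (m : 'I_n -> nat).
Variable B : forall i : 'I_n, 'M[R]_(D, m i).
Hypothesis q_ge1 : 1 <= q.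

Lemma sumr_setC (V : nmodType) (S : {set 'I_n}) (F : 'I_n -> V) :
  \sum_i F i = \sum_(i in S) F i + \sum_(i in ~: S) F i.
Proof.
by rewrite (bigID (mem S)) /=; congr (_ + _); apply: eq_bigl => i; rewrite inE.
Qed.

Definition restrict_coefs (S : {set 'I_n}) (c : coefs R m) : coefs R m :=
  fun i => if i \in S then c i else 0.

Lemma restrict_coefs_id (S : {set 'I_n}) c :
  (forall i, i \notin S -> c i = 0) -> restrict_coefs S c = c.
Proof.
move=> c0; apply: functional_extensionality_dep => i; rewrite /restrict_coefs.
by case: ifPn => // /c0 ->.
Qed.

Lemma l1_obj_restrict (S : {set 'I_n}) c :
  l1_obj q (restrict_coefs S c) = \sum_(i in S) lqnorm q (c i).
Proof.
rewrite /l1_obj [RHS]big_mkcond; apply: eq_bigr => i _; rewrite /restrict_coefs.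
by case: ifP => // _; rewrite lqnorm0.
Qed.

Lemma synth_restrict (S : {set 'I_n}) c :
  synth B (restrict_coefs S c) = \sum_(i in S) B i *m c i.
Proof.
rewrite /synth [RHS]big_mkcond; apply: eq_bigr => i _; rewrite /restrict_coefs.
by case: ifP => // _; rewrite mulmx0.
Qed.

Lemma Vfun_le (S : {set 'I_n}) x (c : coefs R m) :
  x = \sum_(i in S) B i *m c i -> Vfun B q S x <= \sum_(i in S) lqnorm q (c i).
Proof.
move=> xc; apply: ge_inf; last by exists c.
by exists 0 => _ [d [_ ->]]; rewrite sumr_ge0 // => i _; exact: lqnorm_ge0.
Qed.

(* The minimum defining [V_S] is that of [P_l1] for the dictionary whose blocks
   outside [S] are replaced by zero. *)
Lemma Vfun_attained (S : {set 'I_n}) x : dsum B S x ->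
  exists c : coefs R m, x = \sum_(i in S) B i *m c i /\
                        Vfun B q S x = \sum_(i in S) lqnorm q (c i).
Proof.
case=> a xa; pose BS i := if i \in S then B i else 0.
have synth_BS c : synth BS c = \sum_(i in S) B i *m c i.
  rewrite /synth [RHS]big_mkcond; apply: eq_bigr => i _; rewrite /BS.
  by case: ifP => // _; rewrite mul0mx.
have [|c [xc c_min]] := exists_Pl1_opt (B := BS) q_ge1 (x := x).
  by exists a; rewrite synth_BS.
have {}xc : x = \sum_(i in S) B i *m c i by rewrite xc synth_BS.
exists c; split => //; apply/le_anti; rewrite Vfun_le //=.
apply: lb_le_inf; first by exists (\sum_(i in S) lqnorm q (a i)), a.
move=> _ [d [xd ->]]; apply: (le_trans (y := l1_obj q c)).
  by rewrite /l1_obj (sumr_setC S) lerDl sumr_ge0 // => i _; exact: lqnorm_ge0.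
rewrite -l1_obj_restrict; apply: c_min.
by rewrite synth_BS xd; apply: eq_bigr => i iS; rewrite /restrict_coefs iS.
Qed.

Lemma l1_recovery_Vfun_lt (L : {set 'I_n}) :
  (forall y, dsum B L y -> forall c, Pl1_opt B q y c ->
     forall i, i \notin L -> c i = 0) ->
  forall x, x != 0 -> dsum B L x -> dsum B (~: L) x ->
  Vfun B q L x < Vfun B q (~: L) x.
Proof.
move=> recovery x x0 [a xa] xLc.
have [cs cs_opt] : exists c, Pl1_opt B q x c.
  by apply: exists_Pl1_opt => //; exists (restrict_coefs L a); rewrite synth_restrict.
have cs_supp := recovery x (ex_intro _ a xa) cs cs_opt.
have VL : Vfun B q L x <= l1_obj q cs.
  rewrite -(restrict_coefs_id cs_supp) l1_obj_restrict; apply: Vfun_le.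
  by rewrite -synth_restrict restrict_coefs_id //; exact: cs_opt.1.
have [c2 [xc2 Vc2]] := Vfun_attained xLc.
rewrite ltNge; apply/negP => VLc_le_VL.
pose e := restrict_coefs (~: L) c2.
have e_opt : Pl1_opt B q x e.
  split=> [|c' xc']; first by rewrite synth_restrict.
  rewrite l1_obj_restrict -Vc2.
  exact: le_trans VLc_le_VL (le_trans VL (cs_opt.2 c' xc')).
move/eqP: x0; apply; rewrite e_opt.1 /synth big1 // => i _.
have [iL|iLc] := boolP (i \in L).
  by rewrite /e /restrict_coefs inE iL mulmx0.
by rewrite (recovery x (ex_intro _ a xa) e e_opt i iLc) mulmx0.
Qed.

Lemma Vfun_lt_l1_recovery (L : {set 'I_n}) :
  (forall x, x != 0 -> dsum B L x -> dsum B (~: L) x ->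
     Vfun B q L x < Vfun B q (~: L) x) ->
  forall y, dsum B L y -> forall c, Pl1_opt B q y c ->
  forall i, i \notin L -> c i = 0.
Proof.
move=> Vlt y [a ya] c [yc c_min] i0 i0L; have [//|ci0] := eqVneq (c i0) 0; exfalso.
pose x := \sum_(i in ~: L) B i *m c i.
have y_split : y = \sum_(i in L) B i *m c i + x by rewrite yc /synth (sumr_setC L).
have xL : dsum B L x.
  exists (fun i => a i - c i); rewrite -[x](addKr (\sum_(i in L) B i *m c i)).
  rewrite -y_split {1}ya addrC -sumrB.
  by apply: eq_bigr => i _; rewrite mulmxBr.
have [c' [xc' c'_lt]] : exists c' : coefs R m, x = \sum_(i in L) B i *m c' i /\
    \sum_(i in L) lqnorm q (c' i) < \sum_(i in ~: L) lqnorm q (c i).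
  have [x0|x0] := eqVneq x 0.
    exists (fun=> 0); split; first by rewrite x0 big1 // => i _; rewrite mulmx0.
    rewrite [X in X < _]big1 => [|i _]; last exact: lqnorm0.
    apply: lt_le_trans (lqnorm_gt0 q_ge1 ci0) _.
    by rewrite (bigD1 i0) ?inE //= lerDl sumr_ge0 // => i _; exact: lqnorm_ge0.
  have [c' [xc' Vc']] := Vfun_attained xL; exists c'; split; first exact: xc'.
  rewrite -[X in X < _]Vc'.
  by apply: lt_le_trans (Vlt x x0 xL _) (Vfun_le _); last by []; exists c.
pose d := restrict_coefs L (fun i => c i + c' i).
have yd : y = synth B d.
  rewrite synth_restrict y_split xc' -big_split.
  by apply: eq_bigr => i _; rewrite mulmxDr.
have d_le : l1_obj q d <=
    \sum_(i in L) lqnorm q (c i) + \sum_(i in L) lqnorm q (c' i).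
  by rewrite l1_obj_restrict -big_split; apply: ler_sum => i _; exact: lqnormD.
have c_split : l1_obj q c =
    \sum_(i in L) lqnorm q (c i) + \sum_(i in ~: L) lqnorm q (c i).
  exact: sumr_setC.
move: (c_min d yd); apply/negP; rewrite -ltNge c_split.
by apply: le_lt_trans d_le _; rewrite ltrD2l.
Qed.

End BlockRecovery.

Theorem theorem1 (R : realType) (q : R) (D n k : nat) (m : 'I_n -> nat)
    (B : forall i : 'I_n, 'M[R]_(D, m i)) :
  1 <= q -> (0 < k)%N -> (k < n)%N ->
  unit_norm_cols B -> disjoint_blocks B -> unique_kbs B k ->
  ((forall L : {set 'I_n}, #|L| = k ->
      forall y : 'cV[R]_D, dsum B L y ->
      forall c : (forall i : 'I_n, 'cV[R]_(m i)), Pl1_opt B q y c ->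
      forall i : 'I_n, i \notin L -> c i = 0)
   <->
   (forall L : {set 'I_n}, #|L| = k ->
      forall x : 'cV[R]_D, x != 0 -> dsum B L x -> dsum B (~: L) x ->
      Vfun B q L x < Vfun B q (~: L) x)).
Proof.
move=> q_ge1 _ _ _ _ _; split=> recovery L Lk.
- exact: (l1_recovery_Vfun_lt q_ge1 (recovery L Lk)).
- exact: (Vfun_lt_l1_recovery q_ge1 (recovery L Lk)).
Qed.
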